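(* $\mathsf{GKur}=\mathsf{MS4}+\Box\forall\Diamond\Box p\to\Diamond\Box\forall p=\mathsf{MS4}+\Box\neg\Box\forall\neg p\to\neg\Box\forall\neg\Box\Diamond p$.
   Context: $\mathsf{MIPC}$ is the smallest set of formulas in the bimodal language $\mathcal{L}_{\forall\exists}$ containing all theorems of $\mathsf{IPC}$; $\forall(p\wedge q)\leftrightarrow(\forall p\wedge\forall q)$, $\forall p\to p$, $\forall p\to\forall\forall p$; $\exists(p\vee q)\leftrightarrow(\exists p\vee\exists q)$, $p\to\exists p$, $\exists\exists p\to\exists p$, $(\exists p\wedge\exists q)\to\exists(\exists p\wedge q)$; $\exists\forall p\to\forall p$, $\exists p\to\forall\exists p$; closed under modus ponens, substitution and $\varphi/\forall\varphi$. $\mathsf{Kur}=\mathsf{MIPC}+\forall\neg\neg p\to\neg\neg\forall p$. $\mathsf{MS4}$ is the smallest set of formulas in the classical bimodal language $\mathcal{L}_{\Box\forall}$ containing all classical tautologies, the $\mathsf{S4}$ axioms for $\Box$, the $\mathsf{S5}$ axioms for $\forall$, and $\Box\forall p\to\forall\Box p$, closed under modus ponens, substitution, $\Box$- and $\forall$-necessitation; $\Diamond=\neg\Box\neg$, $\exists=\neg\forall\neg$. $\mathsf{GKur}=\mathsf{MS4}+\{\varphi^t:\mathsf{Kur}\vdash\varphi\}$, with Gödel translation $\bot^t=\bot$, $p^t=\Box p$, $(\varphi\wedge\psi)^t=\varphi^t\wedge\psi^t$, $(\varphi\vee\psi)^t=\varphi^t\vee\psi^t$, $(\varphi\to\psi)^t=\Box(\neg\varphi^t\vee\psi^t)$,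 $(\forall\varphi)^t=\Box\forall\varphi^t$, $(\exists\varphi)^t=\exists\varphi^t$. *)

From Stdlib Require Import Arith.
Set Implicit Arguments.

Inductive ifm : Type :=
| IVar : nat -> ifm
| IBot : ifm
| IAnd : ifm -> ifm -> ifm
| IOr  : ifm -> ifm -> ifm
| IImp : ifm -> ifm -> ifm
| IAll : ifm -> ifm
| IEx  : ifm -> ifm.

Definition INeg (a : ifm) : ifm := IImp a IBot.
Definition IIff (a b : ifm) : ifm := IAnd (IImp a b) (IImp b a).

Fixpoint isubst (s : nat -> ifm) (f : ifm) : ifm :=
  match f with
  | IVar n => s n
  | IBot => IBot
  | IAnd a b => IAnd (isubst s a) (isubst s b)
  | IOr a b => IOr (isubst s a) (isubst s b)
  | IImp a b => IImp (isubst s a) (isubst s b)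
  | IAll a => IAll (isubst s a)
  | IEx a => IEx (isubst s a)
  end.

Inductive IPC : ifm -> Prop :=
| ipc_k a b : IPC (IImp a (IImp b a))
| ipc_s a b c : IPC (IImp (IImp a (IImp b c)) (IImp (IImp a b) (IImp a c)))
| ipc_and1 a b : IPC (IImp (IAnd a b) a)
| ipc_and2 a b : IPC (IImp (IAnd a b) b)
| ipc_andI a b : IPC (IImp a (IImp b (IAnd a b)))
| ipc_or1 a b : IPC (IImp a (IOr a b))
| ipc_or2 a b : IPC (IImp b (IOr a b))
| ipc_orE a b c : IPC (IImp (IImp a c) (IImp (IImp b c) (IImp (IOr a b) c)))
| ipc_efq a : IPC (IImp IBot a)
| ipc_mp a b : IPC (IImp a b) -> IPC a -> IPC b.

Definition ip : ifm := IVar 0.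
Definition iq : ifm := IVar 1.

Inductive MIPC_axiom : ifm -> Prop :=
| mipc_a1 : MIPC_axiom (IIff (IAll (IAnd ip iq)) (IAnd (IAll ip) (IAll iq)))
| mipc_a2 : MIPC_axiom (IImp (IAll ip) ip)
| mipc_a3 : MIPC_axiom (IImp (IAll ip) (IAll (IAll ip)))
| mipc_e1 : MIPC_axiom (IIff (IEx (IOr ip iq)) (IOr (IEx ip) (IEx iq)))
| mipc_e2 : MIPC_axiom (IImp ip (IEx ip))
| mipc_e3 : MIPC_axiom (IImp (IEx (IEx ip)) (IEx ip))
| mipc_e4 : MIPC_axiom (IImp (IAnd (IEx ip) (IEx iq)) (IEx (IAnd (IEx ip) iq)))
| mipc_m1 : MIPC_axiom (IImp (IEx (IAll ip)) (IAll ip))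
| mipc_m2 : MIPC_axiom (IImp (IEx ip) (IAll (IEx ip))).

Inductive MIPC_ext (G : ifm -> Prop) : ifm -> Prop :=
| mipcx_ipc f : IPC f -> MIPC_ext G f
| mipcx_ax f : MIPC_axiom f -> MIPC_ext G f
| mipcx_extra f : G f -> MIPC_ext G f
| mipcx_mp a b : MIPC_ext G (IImp a b) -> MIPC_ext G a -> MIPC_ext G b
| mipcx_subst s f : MIPC_ext G f -> MIPC_ext G (isubst s f)
| mipcx_nec f : MIPC_ext G f -> MIPC_ext G (IAll f).

Definition MIPC : ifm -> Prop := MIPC_ext (fun _ => False).

Definition kur_axiom : ifm :=
  IImp (IAll (INeg (INeg ip))) (INeg (INeg (IAll ip))).

Definition Kur : ifm -> Prop := MIPC_ext (fun f => f = kur_axiom).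

Inductive cfm : Type :=
| CVar : nat -> cfm
| CBot : cfm
| CAnd : cfm -> cfm -> cfm
| COr  : cfm -> cfm -> cfm
| CImp : cfm -> cfm -> cfm
| CBox : cfm -> cfm
| CAll : cfm -> cfm.

Definition CNeg (a : cfm) : cfm := CImp a CBot.
Definition CDia (a : cfm) : cfm := CNeg (CBox (CNeg a)).
Definition CEx (a : cfm) : cfm := CNeg (CAll (CNeg a)).

Fixpoint csubst (s : nat -> cfm) (f : cfm) : cfm :=
  match f with
  | CVar n => s n
  | CBot => CBot
  | CAnd a b => CAnd (csubst s a) (csubst s b)
  | COr a b => COr (csubst s a) (csubst s b)
  | CImp a b => CImp (csubst s a) (csubst s b)
  | CBox a => CBox (csubst s a)
  | CAll a => CAll (csubst s a)
  end.

(* Classical tautologies: formulas true under every Boolean valuation in which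
   variables and modalized formulas (Box a, forall a) are treated as atoms. *)
Fixpoint ceval (v : cfm -> bool) (f : cfm) : bool :=
  match f with
  | CVar n => v (CVar n)
  | CBot => false
  | CAnd a b => ceval v a && ceval v b
  | COr a b => ceval v a || ceval v b
  | CImp a b => negb (ceval v a) || ceval v b
  | CBox a => v (CBox a)
  | CAll a => v (CAll a)
  end.

Definition tautology (f : cfm) : Prop := forall v, ceval v f = true.

Definition cp : cfm := CVar 0.
Definition cq : cfm := CVar 1.

Inductive MS4_axiom : cfm -> Prop :=
| ms4_boxK : MS4_axiom (CImp (CBox (CImp cp cq)) (CImp (CBox cp) (CBox cq)))
| ms4_boxT : MS4_axiom (CImp (CBox cp) cp)
| ms4_box4 : MS4_axiom (CImp (CBox cp) (CBox (CBox cp)))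
| ms4_allK : MS4_axiom (CImp (CAll (CImp cp cq)) (CImp (CAll cp) (CAll cq)))
| ms4_allT : MS4_axiom (CImp (CAll cp) cp)
| ms4_all4 : MS4_axiom (CImp (CAll cp) (CAll (CAll cp)))
| ms4_all5 : MS4_axiom (CImp (CEx cp) (CAll (CEx cp)))
| ms4_mix  : MS4_axiom (CImp (CBox (CAll cp)) (CAll (CBox cp))).

Inductive MS4_ext (G : cfm -> Prop) : cfm -> Prop :=
| ms4x_taut f : tautology f -> MS4_ext G f
| ms4x_ax f : MS4_axiom f -> MS4_ext G f
| ms4x_extra f : G f -> MS4_ext G f
| ms4x_mp a b : MS4_ext G (CImp a b) -> MS4_ext G a -> MS4_ext G b
| ms4x_subst s f : MS4_ext G f -> MS4_ext G (csubst s f)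
| ms4x_nbox f : MS4_ext G f -> MS4_ext G (CBox f)
| ms4x_nall f : MS4_ext G f -> MS4_ext G (CAll f).

Definition MS4 : cfm -> Prop := MS4_ext (fun _ => False).

Fixpoint gtr (f : ifm) : cfm :=
  match f with
  | IBot => CBot
  | IVar n => CBox (CVar n)
  | IAnd a b => CAnd (gtr a) (gtr b)
  | IOr a b => COr (gtr a) (gtr b)
  | IImp a b => CBox (COr (CNeg (gtr a)) (gtr b))
  | IAll a => CBox (CAll (gtr a))
  | IEx a => CEx (gtr a)
  end.

Definition GKur : cfm -> Prop :=
  MS4_ext (fun f => exists g, Kur g /\ f = gtr g).

Definition gkur_ax1 : cfm :=
  CImp (CBox (CAll (CDia (CBox cp)))) (CDia (CBox (CAll cp))).

Definition gkur_ax2 : cfm :=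
  CImp (CBox (CNeg (CBox (CAll (CNeg cp)))))
       (CNeg (CBox (CAll (CNeg (CBox (CDia cp)))))).


(* Every Goedel translation is boxed in MS4 (phi^t -> box phi^t).  This makes
   the translated IPC and MIPC axioms theorems of MS4 and lets the translation
   commute with substitution up to provable equivalence, so GKur is MS4 plus
   the single translated Kuroda axiom.  As (~~phi)^t is equivalent to
   box diamond phi^t and box forall box p to box forall p, that axiom is
   MS4-equivalent to box forall diamond box p -> diamond box forall p.  The
   second axiom is the contrapositive of the first at ~p, and conversely. *)

(* Atoms are compared syntactically, so the derived connectives and [cp] are
   unfolded first. *)
Ltac taut :=
  let v := fresh "v" in
  intro v; unfold gkur_ax1, gkur_ax2, cp, CDia, CEx, CNeg; simpl;
  repeat match goal with
  | |- context [ceval v ?a] => destruct (ceval v a)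
  | |- context [v ?a] => destruct (v a)
  end; reflexivity.

Definition subst1 (a : cfm) : nat -> cfm :=
  fun n => match n with 0 => a | _ => CVar n end.
Definition subst2 (a b : cfm) : nat -> cfm :=
  fun n => match n with 0 => a | 1 => b | _ => CVar n end.

Lemma taut_rule0 {G f} : tautology f -> MS4_ext G f.
Proof. exact (@ms4x_taut G f). Qed.

Lemma taut_rule1 {G a b} : tautology (CImp a b) -> MS4_ext G a -> MS4_ext G b.
Proof. intros T H1. exact (ms4x_mp (taut_rule0 T) H1). Qed.

Lemma taut_rule2 {G a b c} :
  tautology (CImp a (CImp b c)) -> MS4_ext G a -> MS4_ext G b -> MS4_ext G c.
Proof. intros T H1 H2. exact (ms4x_mp (taut_rule1 T H1) H2). Qed.

Lemma taut_rule3 {G a b c d} :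
  tautology (CImp a (CImp b (CImp c d))) ->
  MS4_ext G a -> MS4_ext G b -> MS4_ext G c -> MS4_ext G d.
Proof. intros T H1 H2 H3. exact (ms4x_mp (taut_rule2 T H1 H2) H3). Qed.

Lemma taut_rule4 {G a b c d e} :
  tautology (CImp a (CImp b (CImp c (CImp d e)))) ->
  MS4_ext G a -> MS4_ext G b -> MS4_ext G c -> MS4_ext G d -> MS4_ext G e.
Proof. intros T H1 H2 H3 H4. exact (ms4x_mp (taut_rule3 T H1 H2 H3) H4). Qed.

Tactic Notation "taut_from" := apply taut_rule0; taut.
Tactic Notation "taut_from" uconstr(h1) := refine (taut_rule1 _ h1); taut.
Tactic Notation "taut_from" uconstr(h1) uconstr(h2) :=
  refine (taut_rule2 _ h1 h2); taut.
Tactic Notation "taut_from" uconstr(h1) uconstr(h2) uconstr(h3) :=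
  refine (taut_rule3 _ h1 h2 h3); taut.
Tactic Notation "taut_from" uconstr(h1) uconstr(h2) uconstr(h3) uconstr(h4) :=
  refine (taut_rule4 _ h1 h2 h3 h4); taut.

Section MS4Theorems.

Context {G : cfm -> Prop}.
Local Notation "⊢ f" := (MS4_ext G f) (at level 70).

Lemma box_K a b : ⊢ CImp (CBox (CImp a b)) (CImp (CBox a) (CBox b)).
Proof. exact (ms4x_subst (subst2 a b) (ms4x_ax G ms4_boxK)). Qed.
Lemma box_T a : ⊢ CImp (CBox a) a.
Proof. exact (ms4x_subst (subst1 a) (ms4x_ax G ms4_boxT)). Qed.
Lemma box_4 a : ⊢ CImp (CBox a) (CBox (CBox a)).
Proof. exact (ms4x_subst (subst1 a) (ms4x_ax G ms4_box4)). Qed.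
Lemma all_K a b : ⊢ CImp (CAll (CImp a b)) (CImp (CAll a) (CAll b)).
Proof. exact (ms4x_subst (subst2 a b) (ms4x_ax G ms4_allK)). Qed.
Lemma all_T a : ⊢ CImp (CAll a) a.
Proof. exact (ms4x_subst (subst1 a) (ms4x_ax G ms4_allT)). Qed.
Lemma all_4 a : ⊢ CImp (CAll a) (CAll (CAll a)).
Proof. exact (ms4x_subst (subst1 a) (ms4x_ax G ms4_all4)). Qed.
Lemma all_5 a : ⊢ CImp (CEx a) (CAll (CEx a)).
Proof. exact (ms4x_subst (subst1 a) (ms4x_ax G ms4_all5)). Qed.
Lemma box_all_all_box a : ⊢ CImp (CBox (CAll a)) (CAll (CBox a)).
Proof. exact (ms4x_subst (subst1 a) (ms4x_ax G ms4_mix)). Qed.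

Lemma imp_trans {a b c} : ⊢ CImp a b -> ⊢ CImp b c -> ⊢ CImp a c.
Proof. intros H1 H2. taut_from H1 H2. Qed.

Lemma box_mono {a b} : ⊢ CImp a b -> ⊢ CImp (CBox a) (CBox b).
Proof. intro H. exact (ms4x_mp (box_K a b) (ms4x_nbox H)). Qed.
Lemma all_mono {a b} : ⊢ CImp a b -> ⊢ CImp (CAll a) (CAll b).
Proof. intro H. exact (ms4x_mp (all_K a b) (ms4x_nall H)). Qed.

Lemma dia_mono {a b} : ⊢ CImp a b -> ⊢ CImp (CDia a) (CDia b).
Proof.
  intro H. assert (contra : ⊢ CImp (CNeg b) (CNeg a)) by taut_from H.
  taut_from (box_mono contra).
Qed.
Lemma ex_mono {a b} : ⊢ CImp a b -> ⊢ CImp (CEx a) (CEx b).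
Proof.
  intro H. assert (contra : ⊢ CImp (CNeg b) (CNeg a)) by taut_from H.
  taut_from (all_mono contra).
Qed.

Lemma box_and a b : ⊢ CImp (CBox a) (CImp (CBox b) (CBox (CAnd a b))).
Proof.
  assert (pair : ⊢ CImp a (CImp b (CAnd a b))) by taut_from.
  taut_from (box_mono pair) (box_K b (CAnd a b)).
Qed.
Lemma all_and a b : ⊢ CImp (CAll a) (CImp (CAll b) (CAll (CAnd a b))).
Proof.
  assert (pair : ⊢ CImp a (CImp b (CAnd a b))) by taut_from.
  taut_from (all_mono pair) (all_K b (CAnd a b)).
Qed.

Lemma imp_ex a : ⊢ CImp a (CEx a).
Proof. taut_from (all_T (CNeg a)). Qed.

Lemma imp_all_ex a : ⊢ CImp a (CAll (CEx a)).
Proof. exact (imp_trans (imp_ex a) (all_5 a)). Qed.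

Lemma ex_all_all a : ⊢ CImp (CEx (CAll a)) (CAll a).
Proof.
  assert (to_dneg : ⊢ CImp (CAll a) (CAll (CNeg (CNeg a)))) by (apply all_mono; taut_from).
  assert (of_dneg : ⊢ CImp (CAll (CNeg (CNeg a))) (CAll a)) by (apply all_mono; taut_from).
  assert (h : ⊢ CImp (CAll (CEx (CNeg a))) (CAll (CNeg (CAll a))))
    by (apply all_mono; taut_from to_dneg).
  taut_from (all_5 (CNeg a)) of_dneg h.
Qed.

Lemma ex_box_box_ex a : ⊢ CImp (CEx (CBox a)) (CBox (CEx a)).
Proof.
  refine (imp_trans (ex_mono (imp_trans (box_mono (imp_all_ex a)) (box_all_all_box _))) _).
  exact (imp_trans (ex_all_all _) (all_T _)).
Qed.

Lemma box_all_all_box_all a : ⊢ CImp (CBox (CAll a)) (CAll (CBox (CAll a))).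
Proof. exact (imp_trans (box_mono (all_4 a)) (box_all_all_box (CAll a))). Qed.

Lemma box_all_box_all_box_all a :
  ⊢ CImp (CBox (CAll a)) (CBox (CAll (CBox (CAll a)))).
Proof. exact (imp_trans (box_4 (CAll a)) (box_mono (box_all_all_box_all a))). Qed.

Lemma box_all_box_all_box a : ⊢ CImp (CBox (CAll a)) (CBox (CAll (CBox a))).
Proof. exact (imp_trans (box_4 (CAll a)) (box_mono (box_all_all_box a))). Qed.

End MS4Theorems.

Section GoedelTranslation.

Context {G : cfm -> Prop}.
Local Notation "⊢ f" := (MS4_ext G f) (at level 70).

Lemma gtr_boxed x : ⊢ CImp (gtr x) (CBox (gtr x)).
Proof.
  induction x as [n| |a IHa b IHb|a IHa b IHb|a b|a|a IHa]; simpl.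
  - apply box_4.
  - taut_from.
  - taut_from IHa IHb (box_and (gtr a) (gtr b)).
  - assert (ha : ⊢ CImp (CBox (gtr a)) (CBox (COr (gtr a) (gtr b))))
      by (apply box_mono; taut_from).
    assert (hb : ⊢ CImp (CBox (gtr b)) (CBox (COr (gtr a) (gtr b))))
      by (apply box_mono; taut_from).
    taut_from IHa IHb ha hb.
  - apply box_4.
  - apply box_4.
  - exact (imp_trans (ex_mono IHa) (ex_box_box_ex _)).
Qed.

Lemma boxed_gtr_impI {z} a b :
  ⊢ CImp z (CBox z) -> ⊢ CImp z (CImp (gtr a) (gtr b)) -> ⊢ CImp z (gtr (IImp a b)).
Proof.
  intros Hz H. assert (h : ⊢ CImp z (COr (CNeg (gtr a)) (gtr b))) by taut_from H.
  exact (imp_trans Hz (box_mono h)).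
Qed.

Lemma gtr_impI a b : ⊢ CImp (gtr a) (gtr b) -> ⊢ gtr (IImp a b).
Proof. intro H. simpl. apply ms4x_nbox. taut_from H. Qed.

Lemma gtr_impE a b : ⊢ CImp (gtr (IImp a b)) (CImp (gtr a) (gtr b)).
Proof. simpl. taut_from (box_T (COr (CNeg (gtr a)) (gtr b))). Qed.

Lemma gtr_andI a b : ⊢ gtr a -> ⊢ gtr b -> ⊢ gtr (IAnd a b).
Proof. intros Ha Hb. simpl. taut_from Ha Hb. Qed.

Lemma gtr_imp2I a b c :
  ⊢ CImp (CAnd (gtr a) (gtr b)) (gtr c) -> ⊢ gtr (IImp a (IImp b c)).
Proof.
  intro H. apply gtr_impI, boxed_gtr_impI; [apply gtr_boxed|]. taut_from H.
Qed.

Lemma gtr_and_impI x y a b :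
  ⊢ CImp (CAnd (gtr x) (gtr y)) (CImp (gtr a) (gtr b)) ->
  ⊢ CImp (CAnd (gtr x) (gtr y)) (gtr (IImp a b)).
Proof.
  apply boxed_gtr_impI.
  taut_from (gtr_boxed x) (gtr_boxed y) (box_and (gtr x) (gtr y)).
Qed.

Lemma gtr_IPC f : IPC f -> ⊢ gtr f.
Proof.
  induction 1 as [a b|a b c|a b|a b|a b|a b|a b|a b c|a|a b _ IHab _ IHa];
    try (apply gtr_impI; taut_from).
  - apply gtr_imp2I. taut_from.
  - apply gtr_imp2I, gtr_and_impI.
    taut_from (gtr_impE a (IImp b c)) (gtr_impE b c) (gtr_impE a b).
  - apply gtr_imp2I. taut_from.
  - apply gtr_imp2I, gtr_and_impI. taut_from (gtr_impE a c) (gtr_impE b c).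
  - exact (ms4x_mp (ms4x_mp (gtr_impE a b) IHab) IHa).
Qed.

(* The translated axioms hold with arbitrary [P], [Q] in place of [p^t], [q^t];
   only the last one needs [P] to be boxed. *)
Lemma gtr_MIPC_axiom f : MIPC_axiom f -> ⊢ gtr f.
Proof.
  destruct 1; unfold IIff; repeat (apply gtr_andI || apply gtr_impI); cbn [gtr];
    generalize (gtr_boxed ip); generalize (gtr ip) as P; generalize (gtr iq) as Q;
    intros Q P HP.
  - assert (hP : ⊢ CImp (CAll (CAnd P Q)) (CAll P)) by (apply all_mono; taut_from).
    assert (hQ : ⊢ CImp (CAll (CAnd P Q)) (CAll Q)) by (apply all_mono; taut_from).
    taut_from (box_mono hP) (box_mono hQ).
  - assert (h : ⊢ CImp (CAnd (CAll P) (CAll Q)) (CAll (CAnd P Q)))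
      by taut_from (all_and P Q).
    taut_from (box_mono h) (box_and (CAll P) (CAll Q)).
  - exact (imp_trans (box_T _) (all_T P)).
  - apply box_all_box_all_box_all.
  - assert (h : ⊢ CImp (CAll (CAnd (CNeg P) (CNeg Q))) (CAll (CNeg (COr P Q))))
      by (apply all_mono; taut_from).
    taut_from (all_and (CNeg P) (CNeg Q)) h.
  - assert (hP : ⊢ CImp (CEx P) (CEx (COr P Q))) by (apply ex_mono; taut_from).
    assert (hQ : ⊢ CImp (CEx Q) (CEx (COr P Q))) by (apply ex_mono; taut_from).
    taut_from hP hQ.
  - apply imp_ex.
  - assert (h : ⊢ CImp (CAll (CAll (CNeg P))) (CAll (CNeg (CEx P))))
      by (apply all_mono; taut_from).
    taut_from (all_4 (CNeg P)) h.
  - assert (h : ⊢ CImp (CAll (CAnd (CEx P) (CNeg (CAnd (CEx P) Q)))) (CAll (CNeg Q)))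
      by (apply all_mono; taut_from).
    taut_from (all_5 P) (all_and (CEx P) (CNeg (CAnd (CEx P) Q))) h.
  - taut_from (ex_mono (box_all_all_box_all P)) (ex_all_all (CBox (CAll P)))
      (all_T (CBox (CAll P))).
  - exact (imp_trans (imp_trans (ex_mono HP) (ex_box_box_ex P)) (box_mono (all_5 P))).
Qed.

(* Only an equivalence: at a variable [n] the sides are [gtr (s n)] and [CBox (gtr (s n))]. *)
Lemma gtr_isubst s f :
  ⊢ CImp (gtr (isubst s f)) (csubst (fun n => gtr (s n)) (gtr f)) /\
  ⊢ CImp (csubst (fun n => gtr (s n)) (gtr f)) (gtr (isubst s f)).
Proof.
  induction f as [n| |a [a1 a2] b [b1 b2]|a [a1 a2] b [b1 b2]|a [a1 a2] b [b1 b2]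
                 |a [a1 a2]|a [a1 a2]]; simpl.
  - split; [apply gtr_boxed | apply box_T].
  - split; taut_from.
  - split; [taut_from a1 b1 | taut_from a2 b2].
  - split; [taut_from a1 b1 | taut_from a2 b2].
  - split; apply box_mono; [taut_from a2 b1 | taut_from a1 b2].
  - split; apply box_mono, all_mono; assumption.
  - split; apply ex_mono; assumption.
Qed.

Lemma gtr_MIPC_ext (H : ifm -> Prop) f :
  (forall g, H g -> ⊢ gtr g) -> MIPC_ext H f -> ⊢ gtr f.
Proof.
  intros HH Hf. induction Hf as [f Hf|f Hf|f Hf|a b _ IHab _ IHa|s f _ IHf|f _ IHf].
  - exact (gtr_IPC f Hf).
  - exact (gtr_MIPC_axiom f Hf).
  - exact (HH f Hf).
  - exact (ms4x_mp (ms4x_mp (gtr_impE a b) IHab) IHa).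
  - exact (ms4x_mp (proj2 (gtr_isubst s f)) (ms4x_subst _ IHf)).
  - exact (ms4x_nbox (ms4x_nall IHf)).
Qed.

End GoedelTranslation.

Section KurodaAxiom.

Context {G : cfm -> Prop}.
Local Notation "⊢ f" := (MS4_ext G f) (at level 70).
Local Notation tneg a := (CBox (COr (CNeg a) CBot)).

Lemma tneg_tneg_box_dia a : ⊢ CImp (tneg (tneg a)) (CBox (CDia a)).
Proof.
  assert (h : ⊢ CImp (CBox (CNeg a)) (tneg a)) by (apply box_mono; taut_from).
  apply box_mono. taut_from h.
Qed.

Lemma box_dia_tneg_tneg a : ⊢ CImp (CBox (CDia a)) (tneg (tneg a)).
Proof.
  assert (h : ⊢ CImp (tneg a) (CBox (CNeg a))) by (apply box_mono; taut_from).
  apply box_mono. taut_from h.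
Qed.

Lemma gtr_kur_axiom_of_ax1 : ⊢ gkur_ax1 -> ⊢ gtr kur_axiom.
Proof.
  intro ax1. unfold kur_axiom, INeg, ip; cbn [gtr].
  assert (h : ⊢ CImp (CBox (CAll (tneg (tneg (CBox cp)))))
                     (CDia (CBox (CAll (CBox cp))))).
  { taut_from (box_mono (all_mono (tneg_tneg_box_dia (CBox cp))))
              (box_mono (all_mono (box_T (CDia (CBox cp)))))
              ax1 (dia_mono (box_all_box_all_box cp)). }
  apply ms4x_nbox.
  taut_from (imp_trans (imp_trans (box_4 _) (box_mono h)) (box_dia_tneg_tneg _)).
Qed.

Lemma ax1_of_gtr_kur_axiom : ⊢ gtr kur_axiom -> ⊢ gkur_ax1.
Proof.
  unfold kur_axiom, INeg, ip; cbn [gtr]. intro kur.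
  assert (k : ⊢ CImp (CBox (CAll (tneg (tneg (CBox cp)))))
                     (tneg (tneg (CBox (CAll (CBox cp))))))
    by taut_from (ms4x_mp (box_T _) kur).
  refine (imp_trans (box_all_box_all_box (CDia (CBox cp))) _).
  refine (imp_trans (box_mono (all_mono (box_dia_tneg_tneg (CBox cp)))) _).
  refine (imp_trans k _).
  refine (imp_trans (tneg_tneg_box_dia _) _).
  exact (imp_trans (box_T _) (dia_mono (box_mono (all_mono (box_T cp))))).
Qed.

Lemma ax2_of_ax1 : ⊢ gkur_ax1 -> ⊢ gkur_ax2.
Proof. intro ax1. taut_from (ms4x_subst (subst1 (CNeg cp)) ax1). Qed.

Lemma ax1_of_ax2 : ⊢ gkur_ax2 -> ⊢ gkur_ax1.
Proof.
  intro ax2.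
  assert (ax1_dneg : ⊢ CImp (CBox (CAll (CDia (CBox (CNeg (CNeg cp))))))
                            (CDia (CBox (CAll (CNeg (CNeg cp))))))
    by taut_from (ms4x_subst (subst1 (CNeg cp)) ax2).
  assert (to_dneg : ⊢ CImp cp (CNeg (CNeg cp))) by taut_from.
  assert (of_dneg : ⊢ CImp (CNeg (CNeg cp)) cp) by taut_from.
  taut_from (box_mono (all_mono (dia_mono (box_mono to_dneg)))) ax1_dneg
            (dia_mono (box_mono (all_mono of_dneg))).
Qed.

End KurodaAxiom.

Lemma MS4_ext_incl (G1 G2 : cfm -> Prop) :
  (forall g, G1 g -> MS4_ext G2 g) -> forall f, MS4_ext G1 f -> MS4_ext G2 f.
Proof.
  intros HG f Hf. induction Hf.
  - apply ms4x_taut; assumption.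
  - apply ms4x_ax; assumption.
  - apply HG; assumption.
  - exact (ms4x_mp IHHf1 IHHf2).
  - apply ms4x_subst; assumption.
  - apply ms4x_nbox; assumption.
  - apply ms4x_nall; assumption.
Qed.

Lemma MS4_ext_equiv (G1 G2 : cfm -> Prop) :
  (forall g, G1 g -> MS4_ext G2 g) -> (forall g, G2 g -> MS4_ext G1 g) ->
  forall f, MS4_ext G1 f <-> MS4_ext G2 f.
Proof. intros H12 H21 f. split; apply MS4_ext_incl; assumption. Qed.

Theorem proposition3p18 :
  (forall f : cfm, GKur f <-> MS4_ext (fun g => g = gkur_ax1) f) /\
  (forall f : cfm, GKur f <-> MS4_ext (fun g => g = gkur_ax2) f).
Proof.
  assert (ax1_in : MS4_ext (fun g => g = gkur_ax1) gkur_ax1) by (apply ms4x_extra; reflexivity).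
  assert (ax2_in : MS4_ext (fun g => g = gkur_ax2) gkur_ax2) by (apply ms4x_extra; reflexivity).
  assert (kur_in : GKur (gtr kur_axiom)).
  { apply ms4x_extra. exists kur_axiom. split; [apply mipcx_extra|]; reflexivity. }
  assert (GKur_ax1 : forall f, GKur f <-> MS4_ext (fun g => g = gkur_ax1) f).
  { apply MS4_ext_equiv.
    - intros g [h [Kur_h ->]]. refine (gtr_MIPC_ext _ h _ Kur_h).
      intros k ->. exact (gtr_kur_axiom_of_ax1 ax1_in).
    - intros g ->. exact (ax1_of_gtr_kur_axiom kur_in). }
  assert (ax1_ax2 : forall f, MS4_ext (fun g => g = gkur_ax1) f <->
                              MS4_ext (fun g => g = gkur_ax2) f).
  { apply MS4_ext_equiv; intros g ->; [exact (ax1_of_ax2 ax2_in) | exact (ax2_of_ax1 ax1_in)]. }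
  split; intro f; rewrite GKur_ax1; [reflexivity | apply ax1_ax2].
Qed.
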